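(* Let $\mathcal{H}$ be a separable Hilbert space and $\{f_n\}_{n=1}^\infty$ a sequence in $\mathcal{H}$. Then $\{f_n\}$ is a near-Riesz basis for $\mathcal{H}$ if and only if it is simultaneously a frame for $\mathcal{H}$ and a pseudo-Riesz sequence.
   Context: A frame $\{f_n\}$ for $\mathcal{H}$ is a near-Riesz basis if there is a finite set $\sigma\subseteq\mathbb{N}$ such that $\{f_n\}_{n\notin\sigma}$ is a Riesz basis for $\mathcal{H}$. A Bessel sequence is a pseudo-Riesz sequence if it can be transformed into a Riesz sequence by removing a finite number of appropriate vectors from it. *)

From HB Require Import structures.
From mathcomp Require Import all_boot all_order all_algebra.
From mathcomp Require Import all_classical all_reals.
From mathcomp Require Import ereal sequences.
From mathcomp Require Import complex.
Set Implicit Arguments. Unset Strict Implicit. Unset Printing Implicit Defensive.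
Import Order.TTheory GRing.Theory Num.Theory.
Local Open Scope ring_scope.

Section Hilbert.
Variable R : realType.
Local Notation C := (complex R).
Variable V : lmodType C.
Variable ip : V -> V -> C.

Definition inner_product_axioms : Prop :=
  [/\ forall (a : C) (x y z : V), ip (a *: x + y) z = a * ip x z + ip y z,
      forall x y : V, ip y x = conjc (ip x y),
      forall x : V, 0 <= ip x x
    & forall x : V, ip x x = 0 -> x = 0].

Definition hnorm (x : V) : R := Num.sqrt (complex.Re (ip x x)).

Definition hcomplete : Prop :=
  forall u : nat -> V,
    (forall e : R, 0 < e -> exists N : nat, forall m n : nat,
        (N <= m)%N -> (N <= n)%N -> hnorm (u m - u n) < e) ->
    exists x : V, forall e : R, 0 < e -> exists N : nat, forall n : nat,
        (N <= n)%N -> hnorm (u n - x) < e.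

Definition hilbert_space : Prop := inner_product_axioms /\ hcomplete.

Definition hseparable : Prop :=
  exists d : nat -> V, forall (x : V) (e : R), 0 < e ->
    exists n : nat, hnorm (x - d n) < e.

Definition sqmod (z : C) : R := Normc.normc z ^+ 2.

Definition frame_sum (f : nat -> V) (x : V) : \bar R :=
  (\sum_(n <oo) (sqmod (ip x (f n)))%:E)%E.

Definition bessel_seq (f : nat -> V) : Prop :=
  exists B : R, 0 < B /\
    forall x : V, (frame_sum f x <= (B * hnorm x ^+ 2)%:E)%E.

Definition frame (f : nat -> V) : Prop :=
  exists A B : R, [/\ 0 < A, 0 < B &
    forall x : V, ((A * hnorm x ^+ 2)%:E <= frame_sum f x)%E /\
                  (frame_sum f x <= (B * hnorm x ^+ 2)%:E)%E].

Definition riesz_seq_on (P : pred nat) (f : nat -> V) : Prop :=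
  exists A B : R, [/\ 0 < A, 0 < B &
    forall (N : nat) (c : nat -> C),
      A * (\sum_(n < N | P n) sqmod (c n))
        <= hnorm (\sum_(n < N | P n) c n *: f n) ^+ 2 /\
      hnorm (\sum_(n < N | P n) c n *: f n) ^+ 2
        <= B * (\sum_(n < N | P n) sqmod (c n))].

Definition complete_on (P : pred nat) (f : nat -> V) : Prop :=
  forall (x : V) (e : R), 0 < e ->
    exists (N : nat) (c : nat -> C),
      hnorm (x - \sum_(n < N | P n) c n *: f n) < e.

Definition riesz_basis_on (P : pred nat) (f : nat -> V) : Prop :=
  riesz_seq_on P f /\ complete_on P f.

Definition riesz_basis (f : nat -> V) : Prop := riesz_basis_on predT f.

Definition near_riesz_basis (f : nat -> V) : Prop :=
  frame f /\ exists sigma : seq nat,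
    riesz_basis_on (fun n => n \notin sigma) f.

Definition pseudo_riesz_seq (f : nat -> V) : Prop :=
  bessel_seq f /\ exists sigma : seq nat,
    riesz_seq_on (fun n => n \notin sigma) f.

End Hilbert.

From HB Require Import structures.
From mathcomp Require Import all_boot all_order all_algebra.
From mathcomp Require Import all_classical all_reals.
From mathcomp Require Import ereal sequences.
From mathcomp Require Import complex.
From mathcomp Require Import ring lra.
Set Implicit Arguments. Unset Strict Implicit. Unset Printing Implicit Defensive.
Import Order.TTheory GRing.Theory Num.Theory.
Local Open Scope ring_scope.
Local Open Scope complex_scope.

(* Conversely, suppose {f_n} is a
   frame and {f_n}_{n \notin s} is a Riesz sequence.  Adjoining finitely many
   vectors to a family preserves an upper Riesz bound, so the whole family has
   one, B.  Together with the lower frame bound this makes the span of {f_n}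
   dense: if y is almost a best approximation of x in the span and w = x - y,
   the step from w towards B^-1 sum_n <w, f_n> f_n lowers |w|^2 by at least
   sum_n |<w, f_n>|^2 / B, which therefore is small, and then so is |w|^2 by
   the frame inequality.  The vectors f_m, m \in s, are then put back one at a
   time: if f_m is at positive distance from the current span, the enlarged
   family is still a Riesz sequence; otherwise f_m lies in the closure of that
   span and can be left out without losing density. *)

Lemma sqmod_ge0 (R : realType) (z : complex R) : 0 <= sqmod z.
Proof. exact: sqr_ge0. Qed.

Lemma sqmod0 (R : realType) : sqmod (0 : complex R) = 0.
Proof. by rewrite /sqmod Normc.normc0 expr0n. Qed.

Lemma mulcJ (R : realType) (z : complex R) : z * z^* = (sqmod z)%:C.
Proof. by rewrite -sqr_normc normc_def /sqmod rmorphXn; case: z. Qed.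

Lemma sqmodR (R : realType) (r : R) : sqmod r%:C = r ^+ 2.
Proof. by rewrite /sqmod /= expr0n addr0 sqrtr_sqr real_normK ?num_real. Qed.

Definition predUseq (P : pred nat) (s : seq nat) : pred nat :=
  fun n => P n || (n \in s).

Lemma predU1_id (P : pred nat) m : P m -> predU1 m P = P :> pred nat.
Proof. by move=> Pm; apply: funext => n /=; case: eqP => // ->. Qed.

Lemma predUseq_nil (P : pred nat) : predUseq P [::] = P.
Proof. by apply: funext => n; rewrite /predUseq orbF. Qed.

Lemma predUseq_cons (P : pred nat) m s :
  predUseq P (m :: s) = predU1 m (predUseq P s) :> pred nat.
Proof. by apply: funext => n; rewrite /predUseq /= in_cons orbCA. Qed.

Lemma predUseq_consA (P : pred nat) m s :
  predUseq P (m :: s) = predUseq (predU1 m P) s.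
Proof. by rewrite /predUseq; apply: funext => n /=; rewrite in_cons orbCA orbA. Qed.

Lemma big_predU1 (M : nmodType) (P : pred nat) m N (F : nat -> M) : ~~ P m ->
  \sum_(n < N | predU1 m P n) F n =
  \sum_(n < N | P n) F n + (if (m < N)%N then F m else 0).
Proof.
move=> Pm; case: ifP => mN.
  rewrite (bigD1 (Ordinal mN)) /= ?eqxx // addrC; congr (_ + _).
  apply: eq_bigl => i; rewrite -val_eqE /=.
  by case: eqP => [->|]; rewrite ?(negbTE Pm) ?andbF ?andbT.
rewrite addr0; apply: eq_bigl => i /=; case: eqP => // eim.
by move: (ltn_ord i); rewrite eim mN.
Qed.

Lemma predUseq_notin (s s1 : seq nat) :
  predUseq (fun n => n \notin s) s1 = (fun n => n \notin [seq n <- s | n \notin s1]).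
Proof. by apply: funext => n; rewrite /predUseq mem_filter negb_and negbK orbC. Qed.

Section InnerProduct.
Variables (R : realType) (V : lmodType (complex R)) (ip : V -> V -> complex R).
Hypothesis ip_axioms : inner_product_axioms ip.

Definition sqnorm (x : V) : R := complex.Re (ip x x).

Lemma ipDZl a x y z : ip (a *: x + y) z = a * ip x z + ip y z.
Proof. by case: ip_axioms. Qed.

Lemma ipC x y : ip y x = (ip x y)^*.
Proof. by case: ip_axioms. Qed.

Lemma ip0l z : ip 0 z = 0.
Proof.
have := ipDZl 1 0 0 z; rewrite scaler0 addr0 mul1r -{1}[ip 0 z]addr0.
by move/addrI.
Qed.

Lemma ipZl a x z : ip (a *: x) z = a * ip x z.
Proof. by rewrite -[a *: x]addr0 ipDZl ip0l addr0. Qed.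

Lemma ipDl x y z : ip (x + y) z = ip x z + ip y z.
Proof. by rewrite -[x in LHS]scale1r ipDZl mul1r. Qed.

Lemma ipNl x z : ip (- x) z = - ip x z.
Proof. by rewrite -scaleN1r ipZl mulN1r. Qed.

Lemma ipDr x y z : ip z (x + y) = ip z x + ip z y.
Proof. by rewrite ipC ipDl rmorphD /= -!ipC. Qed.

Lemma ipZr a x z : ip z (a *: x) = a^* * ip z x.
Proof. by rewrite ipC ipZl rmorphM /= -ipC. Qed.

Lemma ipNr x z : ip z (- x) = - ip z x.
Proof. by rewrite ipC ipNl rmorphN /= -ipC. Qed.

Lemma ip0r z : ip z 0 = 0.
Proof. by rewrite ipC ip0l rmorph0. Qed.

Lemma ip_sumr (I : Type) (r : seq I) (P : pred I) (F : I -> V) z :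
  ip z (\sum_(i <- r | P i) F i) = \sum_(i <- r | P i) ip z (F i).
Proof. exact: (big_morph (ip z) (fun x y => ipDr x y z) (ip0r z)). Qed.

Lemma sqnorm_ge0 x : 0 <= sqnorm x.
Proof. by case: ip_axioms => _ _ /(_ x); rewrite lecE => /andP[]. Qed.

Lemma ip_self x : ip x x = (sqnorm x)%:C.
Proof.
case: ip_axioms => _ _ /(_ x) /ger0_Im Im0 _.
by rewrite /sqnorm; case: (ip x x) Im0 => a b /= ->.
Qed.

Lemma hnorm_sqr x : hnorm ip x ^+ 2 = sqnorm x.
Proof. by rewrite sqr_sqrtr // sqnorm_ge0. Qed.


Lemma sqnormZ a x : sqnorm (a *: x) = sqmod a * sqnorm x.
Proof. by rewrite /sqnorm ipZl ipZr mulrA mulcJ ip_self -rmorphM. Qed.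

Lemma sqnormN x : sqnorm (- x) = sqnorm x.
Proof. by rewrite /sqnorm ipNl ipNr opprK. Qed.

Lemma sqnormD x y : sqnorm (x + y) = sqnorm x + sqnorm y + 2 * complex.Re (ip x y).
Proof.
rewrite /sqnorm ipDl !ipDr !raddfD (ipC x y).
by case: (ip x y) => a b /=; ring.
Qed.

Lemma sqnormB x y : sqnorm (x - y) = sqnorm x + sqnorm y - 2 * complex.Re (ip x y).
Proof. by rewrite sqnormD sqnormN ipNr raddfN mulrN. Qed.

Lemma sqnormD_le x y : sqnorm (x + y) <= 2 * sqnorm x + 2 * sqnorm y.
Proof. by have := sqnorm_ge0 (x - y); rewrite sqnormB sqnormD; lra. Qed.


Section Span.
Variable f : nat -> V.

Definition lcomb (P : pred nat) (N : nat) (c : nat -> complex R) : V :=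
  \sum_(n < N | P n) c n *: f n.

Definition coef_sqsum (P : pred nat) (N : nat) (c : nat -> complex R) : R :=
  \sum_(n < N | P n) sqmod (c n).

Definition in_span (P : pred nat) (v : V) : Prop := exists N c, v = lcomb P N c.

Definition in_span_closure (P : pred nat) (v : V) : Prop :=
  forall e, 0 < e -> exists2 y, in_span P y & sqnorm (v - y) < e.

Definition dense_span (P : pred nat) : Prop := forall v, in_span_closure P v.

Definition lower_riesz_bound (P : pred nat) (A : R) : Prop :=
  forall N c, A * coef_sqsum P N c <= sqnorm (lcomb P N c).

Definition upper_riesz_bound (P : pred nat) (B : R) : Prop :=
  forall N c, sqnorm (lcomb P N c) <= B * coef_sqsum P N c.

Definition riesz_sequence (P : pred nat) : Prop :=
  exists A B, [/\ 0 < A, 0 < B, lower_riesz_bound P A & upper_riesz_bound P B].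

Lemma coef_sqsum_ge0 P N c : 0 <= coef_sqsum P N c.
Proof. by apply: sumr_ge0 => n _; apply: sqmod_ge0. Qed.

Lemma lcomb_widen P N M c : (N <= M)%N ->
  lcomb P N c = lcomb P M (fun n => if (n < N)%N then c n else 0).
Proof.
move=> NM; rewrite /lcomb (@big_ord_widen_cond _ _ _ N M P (fun n => c n *: f n) NM).
rewrite big_mkcondr; apply: eq_bigr => n _ /=.
by case: ifP; rewrite ?scale0r.
Qed.

Lemma in_spanD P x y : in_span P x -> in_span P y -> in_span P (x + y).
Proof.
move=> [N1 [c1 ->]] [N2 [c2 ->]]; exists (maxn N1 N2).
exists (fun n => (if (n < N1)%N then c1 n else 0) + (if (n < N2)%N then c2 n else 0)).
rewrite (lcomb_widen _ c1 (leq_maxl N1 N2)) (lcomb_widen _ c2 (leq_maxr N1 N2)).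
by rewrite /lcomb -big_split; apply: eq_bigr => n _; rewrite scalerDl.
Qed.

Lemma in_spanZ P a x : in_span P x -> in_span P (a *: x).
Proof.
move=> [N [c ->]]; exists N, (fun n => a * c n).
by rewrite /lcomb scaler_sumr; apply: eq_bigr => n _; rewrite scalerA.
Qed.

Lemma in_span_sub (P Q : pred nat) x : (forall n, P n -> Q n) ->
  in_span P x -> in_span Q x.
Proof.
move=> PQ [N [c ->]]; exists N, (fun n => if P n then c n else 0).
rewrite /lcomb big_mkcond [RHS]big_mkcond; apply: eq_bigr => n _.
by case: (boolP (P n)) => [/PQ ->|_] //; case: (Q n); rewrite ?scale0r.
Qed.

Lemma in_span_closure_sub (P Q : pred nat) x : (forall n, P n -> Q n) ->
  in_span_closure P x -> in_span_closure Q x.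
Proof. by move=> PQ Px e /Px[y /(in_span_sub PQ) Qy lt]; exists y. Qed.

Lemma lcomb_predU1 P m N c : ~~ P m ->
  lcomb (predU1 m P) N c = lcomb P N c + (if (m < N)%N then c m else 0) *: f m.
Proof.
move=> Pm; rewrite /lcomb (big_predU1 _ (fun n => c n *: f n) Pm).
by case: ifP; rewrite ?scale0r.
Qed.

Lemma coef_sqsum_predU1 P m N c : ~~ P m ->
  coef_sqsum (predU1 m P) N c =
  coef_sqsum P N c + sqmod (if (m < N)%N then c m else 0).
Proof.
move=> Pm; rewrite /coef_sqsum (big_predU1 _ (fun n => sqmod (c n)) Pm).
by case: ifP; rewrite ?sqmod0.
Qed.

Lemma in_span_predU1 P m v : ~~ P m -> in_span (predU1 m P) v ->
  exists a y, in_span P y /\ v = y + a *: f m.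
Proof.
move=> Pm [N [c ->]]; rewrite lcomb_predU1 //.
by do 2 eexists; split; first exists N, c.
Qed.

Lemma lower_riesz_bound_le P A A' : A' <= A ->
  lower_riesz_bound P A -> lower_riesz_bound P A'.
Proof.
by move=> le_A lbA N c; rewrite (le_trans _ (lbA N c)) // ler_wpM2r ?coef_sqsum_ge0.
Qed.

Lemma upper_riesz_bound_le P B B' : B <= B' ->
  upper_riesz_bound P B -> upper_riesz_bound P B'.
Proof.
by move=> le_B ubB N c; rewrite (le_trans (ubB N c)) // ler_wpM2r ?coef_sqsum_ge0.
Qed.

Lemma not_in_span_closure_dist_gt0 P v : ~ in_span_closure P v ->
  exists2 d, 0 < d & forall y, in_span P y -> d <= sqnorm (v - y).
Proof.
move=> notPv; apply: contrapT => nod; apply: notPv => e e0.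
apply: contrapT => nody; apply: nod; exists e => // y Py.
by rewrite leNgt; apply/negP => lt_e; apply: nody; exists y.
Qed.

Section DistanceToSpan.
Variables (P : pred nat) (m : nat) (d : R).
Hypothesis dist_fm : forall y, in_span P y -> d <= sqnorm (f m - y).

Lemma sqmod_dist_le a y : in_span P y -> sqmod a * d <= sqnorm (y + a *: f m).
Proof.
move=> Py; have [->|a0] := eqVneq a 0.
  by rewrite sqmod0 mul0r sqnorm_ge0.
have -> : y + a *: f m = a *: (f m - (- a^-1) *: y).
  by rewrite scalerBr scalerA mulrN divff // scaleN1r opprK addrC.
by rewrite sqnormZ ler_wpM2l ?sqmod_ge0 // dist_fm //; apply: in_spanZ.
Qed.

(* The constant comes from combining |a|^2 d <= |y + a f_m|^2 with
   A S <= |y|^2 <= 2 |y + a f_m|^2 + 2 |a|^2 |f_m|^2. *)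
Lemma lower_riesz_bound_predU1 A : 0 < A -> 0 < d -> lower_riesz_bound P A ->
  lower_riesz_bound (predU1 m P) (A * d / (2 * (d + sqnorm (f m)) + A)).
Proof.
move=> A0 d0 lbA; have M0 := sqnorm_ge0 (f m).
have K0 : 0 < 2 * (d + sqnorm (f m)) + A by lra.
have [Pm|Pm] := boolP (P m).
  rewrite predU1_id //; apply: lower_riesz_bound_le lbA.
  by rewrite ler_pdivrMr //; nra.
move=> N c; rewrite lcomb_predU1 // coef_sqsum_predU1 // mulrAC ler_pdivrMr //.
set a := if _ then _ else _; set y := lcomb P N c; set S := coef_sqsum P N c.
have S0 : 0 <= S := coef_sqsum_ge0 P N c.
have q0 := sqmod_ge0 a.
have dist_a : sqmod a * d <= sqnorm (y + a *: f m).
  by apply: sqmod_dist_le; exists N, c.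
have lb_y : A * S <= 2 * sqnorm (y + a *: f m) + 2 * (sqmod a * sqnorm (f m)).
  rewrite -sqnormZ -(sqnormN (a *: f m)); apply: le_trans (lbA N c) _.
  by rewrite -/y -{1}(addrK (a *: f m) y) sqnormD_le.
nra.
Qed.

End DistanceToSpan.

Lemma upper_riesz_bound_predU1 P m B : 0 <= B -> upper_riesz_bound P B ->
  upper_riesz_bound (predU1 m P) (2 * (B + sqnorm (f m))).
Proof.
move=> B0 ubB; have M0 := sqnorm_ge0 (f m).
have [Pm|Pm] := boolP (P m).
  by rewrite predU1_id //; apply: upper_riesz_bound_le ubB; lra.
move=> N c; rewrite lcomb_predU1 // coef_sqsum_predU1 //.
set a := if _ then _ else _.
have ub := ubB N c; have S0 := coef_sqsum_ge0 P N c; have q0 := sqmod_ge0 a.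
by apply: le_trans (sqnormD_le _ _) _; rewrite sqnormZ; nra.
Qed.

Lemma upper_riesz_bound_predUseq P s B : 0 < B -> upper_riesz_bound P B ->
  exists2 B', 0 < B' & upper_riesz_bound (predUseq P s) B'.
Proof.
move=> B0 ubB; elim: s => [|m s [B' B'0 ubB']].
  by exists B; rewrite ?predUseq_nil.
exists (2 * (B' + sqnorm (f m))); first by have := sqnorm_ge0 (f m); lra.
by rewrite predUseq_cons; apply: upper_riesz_bound_predU1 => //; apply: ltW.
Qed.

Lemma riesz_sequence_predU1 P m : riesz_sequence P ->
  (exists2 d, 0 < d & forall y, in_span P y -> d <= sqnorm (f m - y)) ->
  riesz_sequence (predU1 m P).
Proof.
move=> [A [B [A0 B0 lbA ubB]]] [d d0 dist_fm]; have M0 := sqnorm_ge0 (f m).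
exists (A * d / (2 * (d + sqnorm (f m)) + A)), (2 * (B + sqnorm (f m))); split.
- by rewrite divr_gt0 ?mulr_gt0 //; lra.
- lra.
- exact: lower_riesz_bound_predU1.
- by apply: upper_riesz_bound_predU1 => //; apply: ltW.
Qed.

Lemma dense_span_predU1 Q m : in_span_closure Q (f m) ->
  dense_span (predU1 m Q) -> dense_span Q.
Proof.
have [Qm|Qm] := boolP (Q m); first by rewrite predU1_id.
move=> fm_cl dense x e e0.
have e4 : 0 < e / 4 by rewrite divr_gt0.
have [y /(in_span_predU1 Qm) [a [z [Qz ->]]] xy] := dense x _ e4.
have q0 := sqmod_ge0 a.
have ea : 0 < e / (4 * (sqmod a + 1)) by rewrite divr_gt0 //; lra.
have [z' Qz' fmz'] := fm_cl _ ea.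
exists (z + a *: z'); first by apply: in_spanD => //; apply: in_spanZ.
have -> : x - (z + a *: z') = (x - (z + a *: f m)) + a *: (f m - z').
  by rewrite scalerBr !opprD !addrA subrK.
apply: le_lt_trans (sqnormD_le _ _) _; rewrite sqnormZ.
have t0 := sqnorm_ge0 (f m - z').
move: fmz'; rewrite ltr_pdivlMr; last by lra.
nra.
Qed.

Lemma riesz_basis_extraction s P : riesz_sequence P ->
  dense_span (predUseq P s) ->
  exists s1, riesz_sequence (predUseq P s1) /\ dense_span (predUseq P s1).
Proof.
elim: s P => [|m s IH] P rP dense.
  by exists [::]; rewrite predUseq_nil in dense *.
have [fm_cl|/not_in_span_closure_dist_gt0 dist_fm] := pselect (in_span_closure P (f m)).
  apply: IH rP _; apply: (@dense_span_predU1 _ m); last by rewrite -predUseq_cons.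
  by apply: in_span_closure_sub fm_cl => n Pn; rewrite /predUseq Pn.
have [|s1 [rs1 ds1]] := IH _ (riesz_sequence_predU1 rP dist_fm).
  by rewrite -predUseq_consA.
by exists (m :: s1); rewrite predUseq_consA.
Qed.

Definition frame_coef (w : V) (n : nat) : complex R := ip w (f n).

Lemma ip_lcomb_frame_coef w P N :
  ip w (lcomb P N (frame_coef w)) = (coef_sqsum P N (frame_coef w))%:C.
Proof.
rewrite /lcomb ip_sumr /coef_sqsum raddf_sum; apply: eq_bigr => n _.
by rewrite ipZr mulrC mulcJ.
Qed.

Lemma sqnorm_descent B w N : 0 < B -> upper_riesz_bound predT B ->
  sqnorm (w - B^-1%:C *: lcomb predT N (frame_coef w))
    + coef_sqsum predT N (frame_coef w) / B <= sqnorm w.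
Proof.
move=> B0 ubB; have := ubB N (frame_coef w).
rewrite sqnormB sqnormZ ipZr ip_lcomb_frame_coef /= sqmodR mulr0 subr0.
rewrite [B^-1 * _]mulrC.
set v := sqnorm _; set S := coef_sqsum _ _ _ => vS.
have : B^-1 ^+ 2 * v <= S / B.
  by rewrite expr2 -mulrA mulrC ler_pM2r ?invr_gt0 // ler_pdivrMl.
lra.
Qed.

Lemma frame_sum_le w K : (forall N, coef_sqsum predT N (frame_coef w) <= K) ->
  (frame_sum ip f w <= K%:E)%E.
Proof.
move=> bounded; apply: ereal_normedtype.lime_le.
  by apply: is_cvg_nneseries => n _ _; rewrite lee_fin sqmod_ge0.
by apply: nearW => N; rewrite sumEFin lee_fin big_mkord; apply: bounded.
Qed.

Lemma dense_span_of_frame B : 0 < B -> upper_riesz_bound predT B -> frame ip f ->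
  dense_span predT.
Proof.
move=> B0 ubB [A [B_f [A0 _ frame_f]]] x e e0.
pose E := [set sqnorm (x - y) | y in in_span predT]%classic.
have lbE : has_lbound E by exists 0 => _ [y _ <-]; apply: sqnorm_ge0.
have infE : has_inf E.
  split=> //; exists (sqnorm (x - 0)), 0 => //.
  by exists 0%N, (fun=> 0); rewrite /lcomb big_ord0.
have eta0 : 0 < A * e / (2 * B) by rewrite divr_gt0 ?mulr_gt0.
have [_ [y span_y <-] near_inf] := inf_adherent eta0 infE.
exists y => //; set w := x - y in near_inf *.
have coef_le N : coef_sqsum predT N (frame_coef w) <= A * e / 2.
  have := sqnorm_descent w N B0 ubB.
  have : inf E <= sqnorm (w - B^-1%:C *: lcomb predT N (frame_coef w)).
    apply: ge_inf => //; exists (y + B^-1%:C *: lcomb predT N (frame_coef w)).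
      by apply: in_spanD => //; apply: in_spanZ; exists N, (frame_coef w).
    by rewrite /w opprD addrA.
  set S := coef_sqsum _ _ _ => inf_le descent.
  have : S / B < A * e / (2 * B) by lra.
  by rewrite invfM mulrA ltr_pM2r ?invr_gt0 // => /ltW.
have := le_trans (frame_f w).1 (frame_sum_le coef_le).
by rewrite lee_fin hnorm_sqr -mulrA ler_pM2l //; lra.
Qed.

Lemma riesz_seq_onE P : riesz_seq_on ip P f <-> riesz_sequence P.
Proof.
split=> [[A [B [A0 B0 bounds]]]|[A [B [A0 B0 lbA ubB]]]]; exists A, B.
  by split=> // N c; have [] := bounds N c; rewrite hnorm_sqr.
by split=> // N c; rewrite hnorm_sqr; split; [apply: lbA | apply: ubB].
Qed.

Lemma dense_span_complete_on P : dense_span P -> complete_on ip P f.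
Proof.
move=> dense x e e0; have [_ [N [c ->]] close] := dense x (e ^+ 2) (exprn_gt0 2 e0).
by exists N, c; rewrite /hnorm -(ger0_norm (ltW e0)) -sqrtr_sqr ltr_sqrt // exprn_gt0.
Qed.

End Span.
End InnerProduct.


Theorem mainTheorem7 (R : realType) (V : lmodType (complex R))
    (ip : V -> V -> complex R) :
  hilbert_space ip -> hseparable ip ->
  forall f : nat -> V,
    near_riesz_basis ip f <-> (frame ip f /\ pseudo_riesz_seq ip f).
Proof.
move=> [ip_axioms _] _ f; split.
  move=> [frame_f [s [riesz_s _]]]; split=> //; split; last by exists s.
  by case: frame_f => A [B [_ B0 bounds]]; exists B; split=> // x; case: (bounds x).
move=> [frame_f [_ [s /(riesz_seq_onE ip_axioms) riesz_s]]]; split=> //.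
have cover : predUseq (fun n => n \notin s) s = predT.
  by apply: funext => n; rewrite /predUseq orNb.
have [B B0 ubB] : exists2 B, 0 < B & upper_riesz_bound ip f predT B.
  case: riesz_s => A [B [_ B0 _ ubB]].
  by rewrite -cover; apply: upper_riesz_bound_predUseq ubB.
have := dense_span_of_frame ip_axioms B0 ubB frame_f; rewrite -cover.
move=> /(riesz_basis_extraction ip_axioms riesz_s) [s1 [riesz_s1 dense_s1]].
exists [seq n <- s | n \notin s1]; rewrite -predUseq_notin.
by split; [apply/(riesz_seq_onE ip_axioms) | apply: dense_span_complete_on].
Qed.
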